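(* Fix integers $K,M\ge1$, $L\ge2$, $N_r\ge1$, and constants $T_{s,k}>0$, $E_{p,k}\ge0$, $E_k>0$, $T_c>0$, $X_k(m)>0$, $\mu_{\ell,m}\in\mathbb{R}$, $\sigma_m^2>0$, $\sigma_{s,k}^2\ge0$, $\sigma_r^2\ge0$, $N_0>0$, and $\mathbf h_{k,m}\in\mathbb{C}^{N_r}$. Consider the problem $\mathcal P_4$: maximize $\alpha$ over variables $\alpha\in\mathbb R$, $P_{s,k}>0$, $c_{k,m}\in\mathbb R$ ($c_{k,m}\ge 0$), $\mathbf f_m\in\mathbb C^{N_r}$ (viewed as a vector of real and imaginary parts), $u_{k,m}>0$, $v_{\ell,\ell',m}>0$, subject to $$P_{s,k}T_{s,k}+E_{p,k}+T_c\sum_{m=1}^M u_{k,m}X_k(m)-E_k\le0\quad(1\le k\le K),$$ $$\alpha-\sum_{m=1}^M v_{\ell,\ell',m}\le0\quad(1\le\ell\ne\ell'\le L),$$ $$\frac{c_{k,m}^2}{u_{k,m}}-R_{k,m}(\mathbf f_m)\le0\quad(\forall k,m),$$ $$Z_m(\{P_{s,k}\},\{c_{k,m}\},\mathbf f_m)-Q_{\ell,\ell',m}(\{c_{k,m}\},v_{\ell,\ell',m})\le0\quad(\forall \ell\ne\ell',m),$$ where $R_{k,m}(\mathbf f_m)=\mathbf h_{k,m}^H\mathbf f_m\mathbf f_m^H\mathbf h_{k,m}$, $$Z_m=\sigma_m^2\Big(\sum_{k=1}^K c_{k,m}\Big)^2+\sum_{k=1}^K c_{k,m}^2\Big(\sigma_{s,k}^2+\frac{\sigma_r^2}{P_{s,k}}\Big)+N_0\mathbf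 f_m^H\mathbf f_m,\qquad Q_{\ell,\ell',m}=\frac{(\mu_{\ell,m}-\mu_{\ell',m})^2}{v_{\ell,\ell',m}}\Big(\sum_{k=1}^K c_{k,m}\Big)^2.$$ Then $\mathcal P_4$ is a d.c. problem.
   Context: A d.c. (difference-of-convex) problem is an optimization problem whose objective function and all constraint functions can each be written as the difference of two convex functions on the (convex) domain of the variables. Here the domain is $P_{s,k}>0$, $u_{k,m}>0$, $v_{\ell,\ell',m}>0$, $c_{k,m}$ real, and $\mathbf f_m\in\mathbb C^{N_r}\cong\mathbb R^{2N_r}$. *)

(* Optimisation variables of problem P4, over an arbitrary
   real field R (the statement is purely algebraic). *)
From mathcomp Require Import all_boot all_order all_algebra.
Set Implicit Arguments. Unset Strict Implicit. Unset Printing Implicit Defensive.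
Import Order.TTheory GRing.Theory Num.Theory.
Local Open Scope ring_scope.

(* A point of the variable space of P4:
   alpha, P_{s,k}, c_{k,m}, f_m = fre_m + i fim_m (real and imaginary parts),
   u_{k,m}, v_{l,l',m}. *)
Record var (R : realFieldType) (K M L N : nat) := Var {
  va  : R;
  vP  : 'I_K -> R;
  vc  : 'I_K -> 'I_M -> R;
  vfr : 'I_M -> 'I_N -> R;
  vfi : 'I_M -> 'I_N -> R;
  vu  : 'I_K -> 'I_M -> R;
  vv  : 'I_L -> 'I_L -> 'I_M -> R }.

Section DC.
Variables (R : realFieldType) (K M L N : nat).
Notation V := (var R K M L N).

Definition comb (t : R) (x y : V) : V :=
  Var (t * va x + (1 - t) * va y)
      (fun k => t * vP x k + (1 - t) * vP y k)
      (fun k m => t * vc x k m + (1 - t) * vc y k m)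
      (fun m i => t * vfr x m i + (1 - t) * vfr y m i)
      (fun m i => t * vfi x m i + (1 - t) * vfi y m i)
      (fun k m => t * vu x k m + (1 - t) * vu y k m)
      (fun l l' m => t * vv x l l' m + (1 - t) * vv y l l' m).

Definition in_dom (x : V) : Prop :=
  [/\ forall k, 0 < vP x k,
      forall k m, 0 < vu x k m
    & forall l l' m, 0 < vv x l l' m].

Definition convex_on_dom (g : V -> R) : Prop :=
  forall (x y : V) (t : R), in_dom x -> in_dom y -> 0 <= t -> t <= 1 ->
    g (comb t x y) <= t * g x + (1 - t) * g y.

Definition is_dc (g : V -> R) : Prop :=
  exists g1 g2 : V -> R, [/\ convex_on_dom g1, convex_on_dom g2
    & forall x, in_dom x -> g x = g1 x - g2 x].

(* channel h_{k,m} = hr + i hi in C^N *)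
Variables (hr hi : 'I_K -> 'I_M -> 'I_N -> R).

(* R_{k,m}(f_m) = h^H f f^H h = |h^H f|^2 ;
   h^H f = sum_i conj(h_i) f_i = sum (hr fr + hi fi) + i sum (hr fi - hi fr) *)
Definition Rkm (k : 'I_K) (m : 'I_M) (x : V) : R :=
  (\sum_i (hr k m i * vfr x m i + hi k m i * vfi x m i)) ^+ 2 +
  (\sum_i (hr k m i * vfi x m i - hi k m i * vfr x m i)) ^+ 2.

Variables (sigma2 : 'I_M -> R) (sigs2 : 'I_K -> R) (sigr2 N0 : R)
          (mu : 'I_L -> 'I_M -> R).

Definition Zm (m : 'I_M) (x : V) : R :=
  sigma2 m * (\sum_k vc x k m) ^+ 2
  + \sum_k vc x k m ^+ 2 * (sigs2 k + sigr2 / vP x k)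
  + N0 * \sum_i (vfr x m i ^+ 2 + vfi x m i ^+ 2).

Definition Qllm (l l' : 'I_L) (m : 'I_M) (x : V) : R :=
  (mu l m - mu l' m) ^+ 2 / vv x l l' m * (\sum_k vc x k m) ^+ 2.

End DC.

From mathcomp Require Import all_boot all_order all_algebra.
Import Order.TTheory GRing.Theory Num.Theory.
From mathcomp Require Import ring lra.
Local Open Scope ring_scope.

Set Implicit Arguments.
Unset Strict Implicit.

(* Every constraint function of P4 is built from affine maps, squares of
   affine maps and quadratic-over-linear terms a^2/p with p affine and
   positive on the domain, all of which are convex there.  The terms entering
   with a minus sign, R_{k,m} (a sum of two squares of affine maps) and
   Q_{l,l',m} (a nonnegative multiple of (sum_k c_{k,m})^2 / v_{l,l',m}), are
   convex as well, so each constraint is a difference of convex functions. *)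

Lemma sqr_div_convex (R : realFieldType) (t a b p q : R) :
  0 <= t -> t <= 1 -> 0 < p -> 0 < q ->
  (t * a + (1 - t) * b) ^+ 2 / (t * p + (1 - t) * q)
  <= t * (a ^+ 2 / p) + (1 - t) * (b ^+ 2 / q).
Proof.
move=> t_ge0 t_le1 p_gt0 q_gt0.
have den_gt0 : 0 < t * p + (1 - t) * q by nra.
rewrite ler_pdivrMr // -subr_ge0.
have -> : (t * (a ^+ 2 / p) + (1 - t) * (b ^+ 2 / q)) * (t * p + (1 - t) * q)
          - (t * a + (1 - t) * b) ^+ 2 = t * (1 - t) * (a * q - b * p) ^+ 2 / (p * q).
  by field; rewrite ?gt_eqF.
apply: divr_ge0; last by rewrite mulr_ge0 ?ltW.
by rewrite mulr_ge0 ?sqr_ge0 // mulr_ge0 // subr_ge0.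
Qed.

Section Convexity.
Variables (R : realFieldType) (K M L N : nat).
Notation V := (var R K M L N).
Implicit Types (f g : V -> R).

Definition affine f := forall x y t, f (comb t x y) = t * f x + (1 - t) * f y.

Lemma affine_cst (c : R) : affine (fun _ => c).
Proof. by move=> x y t; ring. Qed.

Lemma affineD f g : affine f -> affine g -> affine (fun x => f x + g x).
Proof. by move=> hf hg x y t; rewrite hf hg; ring. Qed.

Lemma affineB f g : affine f -> affine g -> affine (fun x => f x - g x).
Proof. by move=> hf hg x y t; rewrite hf hg; ring. Qed.

Lemma affineMl (c : R) f : affine f -> affine (fun x => c * f x).
Proof. by move=> hf x y t; rewrite hf; ring. Qed.

Lemma affineMr (c : R) f : affine f -> affine (fun x => f x * c).
Proof. by move=> hf x y t; rewrite hf; ring. Qed.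

Lemma affine_sum (I : finType) (F : I -> V -> R) :
  (forall i, affine (F i)) -> affine (fun x => \sum_i F i x).
Proof.
by move=> hF x y t; rewrite !mulr_sumr -big_split; apply: eq_bigr => i _; apply: hF.
Qed.

Lemma affine_convex f : affine f -> convex_on_dom f.
Proof. by move=> hf x y t _ _ _ _; rewrite hf. Qed.

Lemma eq_convex_on_dom f g : f =1 g -> convex_on_dom g -> convex_on_dom f.
Proof. by move=> efg hg x y t dx dy t0 t1; rewrite !efg; apply: hg. Qed.

Lemma convexD f g : convex_on_dom f -> convex_on_dom g ->
  convex_on_dom (fun x => f x + g x).
Proof.
move=> hf hg x y t dx dy t0 t1.
by have := hf x y t dx dy t0 t1; have := hg x y t dx dy t0 t1; lra.
Qed.

Lemma convexMl (c : R) f : 0 <= c -> convex_on_dom f ->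
  convex_on_dom (fun x => c * f x).
Proof.
move=> c_ge0 hf x y t dx dy t0 t1.
have := ler_wpM2l c_ge0 (hf x y t dx dy t0 t1).
by rewrite mulrDr mulrCA [c * (_ * _)]mulrCA.
Qed.

Lemma convex_sum (I : finType) (F : I -> V -> R) :
  (forall i, convex_on_dom (F i)) -> convex_on_dom (fun x => \sum_i F i x).
Proof.
move=> hF x y t dx dy t0 t1; rewrite !mulr_sumr -big_split.
by apply: ler_sum => i _; apply: hF.
Qed.

Lemma convex_sqr_affine f : affine f -> convex_on_dom (fun x => f x ^+ 2).
Proof.
move=> hf x y t _ _ t0 t1; rewrite hf -subr_ge0.
have -> : t * f x ^+ 2 + (1 - t) * f y ^+ 2 - (t * f x + (1 - t) * f y) ^+ 2
          = t * (1 - t) * (f x - f y) ^+ 2 by ring.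
by rewrite mulr_ge0 ?sqr_ge0 // mulr_ge0 // subr_ge0.
Qed.

Lemma convex_sqr_div_affine f p : affine f -> affine p ->
  (forall x, in_dom x -> 0 < p x) -> convex_on_dom (fun x => f x ^+ 2 / p x).
Proof.
move=> hf hp p_gt0 x y t dx dy t0 t1; rewrite hf hp.
exact: sqr_div_convex (p_gt0 x dx) (p_gt0 y dy).
Qed.

Lemma convex_dc f g : convex_on_dom f -> convex_on_dom g ->
  is_dc (fun x => f x - g x).
Proof. by move=> hf hg; exists f, g. Qed.

Lemma affine_dc f : affine f -> is_dc f.
Proof.
move=> hf; exists f, (fun _ => 0); split; last by move=> x _; rewrite subr0.
  exact: affine_convex.
exact/affine_convex/affine_cst.
Qed.

Lemma affine_sum_vc (m : 'I_M) : affine (fun x : V => \sum_k vc x k m).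
Proof. exact: affine_sum. Qed.

Lemma convex_Rkm (hr hi : 'I_K -> 'I_M -> 'I_N -> R) k m :
  convex_on_dom (@Rkm R K M L N hr hi k m).
Proof.
by apply: convexD; apply/convex_sqr_affine/affine_sum => i;
  [apply: affineD | apply: affineB]; apply: affineMl.
Qed.

Lemma convex_Zm (sigma2 : 'I_M -> R) (sigs2 : 'I_K -> R) (sigr2 N0 : R) m :
  0 <= sigma2 m -> (forall k, 0 <= sigs2 k) -> 0 <= sigr2 -> 0 <= N0 ->
  convex_on_dom (@Zm R K M L N sigma2 sigs2 sigr2 N0 m).
Proof.
move=> sigma_ge0 sigs_ge0 sigr_ge0 N0_ge0.
apply: convexD; first apply: convexD.
- exact/convexMl/convex_sqr_affine/affine_sum_vc.
- apply: convex_sum => k.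
  apply: (@eq_convex_on_dom _
    (fun x => sigs2 k * vc x k m ^+ 2 + sigr2 * (vc x k m ^+ 2 / vP x k))).
    by move=> x; ring.
  apply: convexD; apply: convexMl => //; first exact: convex_sqr_affine.
  by apply: convex_sqr_div_affine => // x [].
- by apply/convexMl/convex_sum => // i; apply: convexD; apply: convex_sqr_affine.
Qed.

Lemma convex_Qllm (mu : 'I_L -> 'I_M -> R) l l' m :
  convex_on_dom (@Qllm R K M L N mu l l' m).
Proof.
apply: (@eq_convex_on_dom _
  (fun x => (mu l m - mu l' m) ^+ 2 * ((\sum_k vc x k m) ^+ 2 / vv x l l' m))).
  by move=> x; rewrite /Qllm mulrAC -mulrA.
apply: convexMl; first exact: sqr_ge0.
by apply: convex_sqr_div_affine; [exact: affine_sum_vc | by [] | move=> x []].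
Qed.

End Convexity.

Unset Implicit Arguments.

Theorem lemma3 (R : realFieldType) (K M L N : nat)
  (hK : (1 <= K)%N) (hM : (1 <= M)%N) (hL : (2 <= L)%N) (hN : (1 <= N)%N)
  (Ts Ep : 'I_K -> R) (E : 'I_K -> R) (Tc : R) (X : 'I_K -> 'I_M -> R)
  (mu : 'I_L -> 'I_M -> R) (sigma2 : 'I_M -> R) (sigs2 : 'I_K -> R)
  (sigr2 N0 : R) (hr hi : 'I_K -> 'I_M -> 'I_N -> R)
  (hTs : forall k, 0 < Ts k) (hEp : forall k, 0 <= Ep k) (hE : forall k, 0 < E k)
  (hTc : 0 < Tc) (hX : forall k m, 0 < X k m) (hsigma : forall m, 0 < sigma2 m)
  (hsigs : forall k, 0 <= sigs2 k) (hsigr : 0 <= sigr2) (hN0 : 0 < N0) :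
  (* objective alpha *)
  is_dc (fun x : var R K M L N => va x)
  (* energy constraints *)
  /\ (forall k : 'I_K, is_dc (fun x : var R K M L N =>
        vP x k * Ts k + Ep k + Tc * (\sum_m vu x k m * X k m) - E k))
  (* alpha - sum_m v_{l,l',m} <= 0 *)
  /\ (forall l l' : 'I_L, l != l' -> is_dc (fun x : var R K M L N =>
        va x - \sum_m vv x l l' m))
  (* c^2/u - R_{k,m}(f_m) <= 0 *)
  /\ (forall (k : 'I_K) (m : 'I_M), is_dc (fun x : var R K M L N =>
        vc x k m ^+ 2 / vu x k m - Rkm hr hi k m x))
  (* Z_m - Q_{l,l',m} <= 0 *)
  /\ (forall (l l' : 'I_L) (m : 'I_M), l != l' -> is_dc (fun x : var R K M L N =>
        Zm sigma2 sigs2 sigr2 N0 m x - Qllm mu l l' m x))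
  (* c_{k,m} >= 0, i.e. -c_{k,m} <= 0 *)
  /\ (forall (k : 'I_K) (m : 'I_M), is_dc (fun x : var R K M L N => - vc x k m)).
Proof.
split; first exact: affine_dc.
split.
  move=> k; apply/affine_dc/affineB/affine_cst.
  apply/affineD/affineMl/affine_sum => [|m]; last exact: affineMr.
  exact/affineD/affine_cst/affineMr.
split.
  by move=> l l' _; apply/affine_dc/affineB/affine_sum.
split.
  move=> k m; apply: convex_dc (convex_Rkm hr hi k m).
  by apply: convex_sqr_div_affine => // x [].
split.
  move=> l l' m _; apply: convex_dc (convex_Qllm mu l l' m).
  by apply: convex_Zm => //; [exact: ltW (hsigma m) | exact: ltW].
by move=> k m; apply: affine_dc => x y t /=; ring.
Qed.
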